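(* Let $(\mathcal A,\varphi,\mathcal F,\Phi)$ be a ncps of type B$'$ with associated infinitesimal ncps $(\mathcal B,\varphi,\varphi')$. Let $a_1,a_2\in\mathcal A$ and $f_1,f_2\in\mathcal F$ and assume that $(\{a_1,a_2\},\{f_1,f_2\})$ is B$'$-free, i.e. with $\mathcal A_i$ the unital subalgebra generated by $a_i$ and $\mathcal F_j$ the subalgebra generated by $f_j$, the pair $((\mathcal A_i)_{i=1,2},(\mathcal F_j)_{j=1,2})$ is B$'$-free. Let $b_i=a_i+f_i\in\mathcal B$. If $a_i$ has distribution $\mu_i$ w.r.t. $\varphi$ and $f_i$ has distribution $\nu_i$ w.r.t. $\varphi'$ ($i=1,2$), then the infinitesimal distribution of $b_1+b_2$ w.r.t. $(\varphi,\varphi')$ is $(\mu_1\boxplus\mu_2,\nu)$, where $\nu$ is characterized by $$G_\nu(z)=G_{\nu_1+\nu_2}(F_{\mu_1\boxplus\mu_2}(z))\,F_{\mu_1\boxplus\mu_2}'(z).$$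
   Context: Ncps of type B$'$ $(\mathcal A,\varphi,\mathcal F,\Phi)$: $\mathcal A$ unital complex algebra, $\varphi(1_{\mathcal A})=1$, $\mathcal F$ an algebra which is an $\mathcal A$-bimodule compatible with its multiplication, $\Phi:\mathcal F\to\mathbb C$ linear. $\mathcal B=\mathcal A\oplus\mathcal F$ with product $(a_1,f_1)(a_2,f_2)=(a_1a_2,a_1f_2+f_1a_2+f_1f_2)$; $\varphi(a+f):=\varphi(a)$, $\varphi'(a+f):=\Phi(f)$. For unital subalgebras $(\mathcal A_i)_{i\in I}$ of $\mathcal A$ and subalgebras $(\mathcal F_j)_{j\in J}$ of $\mathcal F$, the pair is B$'$-free if: (i) $(\mathcal A_i)$ are free w.r.t. $\varphi$ ($\varphi(c_1\cdots c_n)=0$ for alternating indices and centered $c_l\in\mathcal A_{i_l}$); (ii) with $\mathcal A_0$ the algebra generated by all $\mathcal A_i$ and $\mathcal F_0$ the algebra generated by all $\mathcal F_j$, $\Phi(c_0g_1c_1\cdots c_{n-1}g_nc_n)=\varphi(c_0c_n)\prod_{l=1}^{n-1}\varphi(c_l)\,\Phi(g_1\cdots g_n)$ for $c_l\in\mathcal A_0$, $g_l\in\mathcal F_0$ (cyclic-antimonotone independence); (iii) $\Phi(g_1\cdots g_n)=0$ whenever $n\ge2$, $j_1\ne j_2\ne\cdots\ne j_n$, $g_l\in\mathcal F_{j_l}$ (trivial independence). The distribution of $b$ w.r.t. $\omega$ is the functional $x^n\mapsto\omega(b^n)$ on $\mathbb C[x]$ ($b^0=1$); infinitesimal distribution w.r.t.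 $(\varphi,\varphi')$ is the pair. $\mu_1\boxplus\mu_2$ is the free convolution (distribution of the sum of two free elements with distributions $\mu_1,\mu_2$). $G_\mu(z)=\sum_{n\ge0}\mu(x^n)z^{-n-1}$, $F_\mu=1/G_\mu$, as formal series; $\nu_1+\nu_2$ is the sum of linear functionals. *)

From HB Require Import structures.
From mathcomp Require Import all_boot all_order all_algebra.
From mathcomp Require Export complex reals.
Set Implicit Arguments. Unset Strict Implicit. Unset Printing Implicit Defensive.
Import GRing.Theory Num.Theory.
Local Open Scope ring_scope.

Section NcpsBprime.
Variable C : fieldType.

Definition ncpsB'_axioms (A : algType C) (F : lmodType C) (phi : {scalar A})
  (mulF : F -> F -> F) (lact : A -> F -> F) (ract : F -> A -> F) : Prop :=
  phi 1 = 1 /\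
  (forall f g h, mulF f (mulF g h) = mulF (mulF f g) h) /\
  (forall (c : C) f g h, mulF (c *: f + g) h = c *: mulF f h + mulF g h) /\
  (forall (c : C) f g h, mulF f (c *: g + h) = c *: mulF f g + mulF f h) /\
  (forall f, lact 1 f = f) /\
  (forall a b f, lact (a * b) f = lact a (lact b f)) /\
  (forall f, ract f 1 = f) /\
  (forall a b f, ract f (a * b) = ract (ract f a) b) /\
  (forall a b f, lact a (ract f b) = ract (lact a f) b) /\
  (forall (c : C) a b f, lact (c *: a + b) f = c *: lact a f + lact b f) /\
  (forall (c : C) a f g, lact a (c *: f + g) = c *: lact a f + lact a g) /\
  (forall (c : C) a b f, ract f (c *: a + b) = c *: ract f a + ract f b) /\
  (forall (c : C) a f g, ract (c *: f + g) a = c *: ract f a + ract g a) /\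
  (forall a f g, lact a (mulF f g) = mulF (lact a f) g) /\
  (forall a f g, ract (mulF f g) a = mulF f (ract g a)) /\
  (forall a f g, mulF (ract f a) g = mulF f (lact a g)).

(* The algebra B = A (+) F, with elements represented as pairs (a, f). *)
Section B.
Variables (A : algType C) (F : lmodType C)
  (mulF : F -> F -> F) (lact : A -> F -> F) (ract : F -> A -> F).

Definition addB (x y : A * F) : A * F := (x.1 + y.1, x.2 + y.2).
Definition mulB (x y : A * F) : A * F :=
  (x.1 * y.1, lact x.1 y.2 + ract x.2 y.1 + mulF x.2 y.2).
Definition oneB : A * F := (1, 0).
Definition powB (b : A * F) (n : nat) : A * F := iter n (mulB b) oneB.
Definition varphiB (phi : A -> C) (x : A * F) : C := phi x.1.
Definition varphi'B (Phi : F -> C) (x : A * F) : C := Phi x.2.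

Definition in_ualg1 (a x : A) : Prop :=
  exists (n : nat) (c : nat -> C), x = \sum_(k < n) c k *: a ^+ k.
(* f^(k+1) in F *)
Definition fpowS (f : F) (k : nat) : F := iter k (mulF f) f.
Definition in_alg1F (f g : F) : Prop :=
  exists (n : nat) (c : nat -> C), g = \sum_(k < n) c k *: fpowS f k.
Definition in_ualg2 (a : bool -> A) (x : A) : Prop :=
  exists s : seq (C * seq bool), x = \sum_(p <- s) p.1 *: \prod_(i <- p.2) a i.
Fixpoint fword (f : bool -> F) (x : bool) (w : seq bool) : F :=
  match w with
  | [::] => f x
  | y :: w' => mulF (f x) (fword f y w')
  end.
Definition in_alg2F (f : bool -> F) (g : F) : Prop :=
  exists s : seq (C * (bool * seq bool)),
    g = \sum_(p <- s) p.1 *: fword f p.2.1 p.2.2.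

Fixpoint altF (c : nat -> A) (g : nat -> F) (k m : nat) : F :=
  match m with
  | 0 => ract (g k) (c k)
  | m'.+1 => mulF (ract (g k) (c k)) (altF c g k.+1 m')
  end.
Fixpoint gprod (g : nat -> F) (k m : nat) : F :=
  match m with
  | 0 => g k
  | m'.+1 => mulF (g k) (gprod g k.+1 m')
  end.

Definition free_pair (phi : A -> C) (a : bool -> A) : Prop :=
  forall (n : nat) (idx : nat -> bool) (c : nat -> A),
    (0 < n)%N ->
    (forall l, (l < n)%N -> in_ualg1 (a (idx l)) (c l) /\ phi (c l) = 0) ->
    (forall l, (l.+1 < n)%N -> idx l != idx l.+1) ->
    phi (\prod_(l < n) c l) = 0.

(* (ii) cyclic-antimonotone independence: for n = m+1 >= 1,
   Phi(c_0 g_1 c_1 ... g_n c_n) = phi(c_0 c_n) prod_(l=1)^(n-1) phi(c_l) Phi(g_1...g_n) *)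
Definition cyc_antimonotone (phi : A -> C) (Phi : F -> C)
  (a : bool -> A) (f : bool -> F) : Prop :=
  forall (m : nat) (c : nat -> A) (g : nat -> F),
    (forall l, (l <= m.+1)%N -> in_ualg2 a (c l)) ->
    (forall l, (1 <= l <= m.+1)%N -> in_alg2F f (g l)) ->
    Phi (lact (c 0%N) (altF c g 1 m)) =
      phi (c 0%N * c m.+1) * (\prod_(1 <= l < m.+1) phi (c l)) * Phi (gprod g 1 m).

(* (iii) trivial independence: for n = m+2 >= 2 alternating factors *)
Definition trivially_indep (Phi : F -> C) (f : bool -> F) : Prop :=
  forall (m : nat) (idx : nat -> bool) (g : nat -> F),
    (forall l, (l <= m.+1)%N -> in_alg1F (f (idx l)) (g l)) ->
    (forall l, (l <= m)%N -> idx l != idx l.+1) ->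
    Phi (gprod g 0 m.+1) = 0.

(* B'-freeness of ((A_i)_{i=1,2}, (F_j)_{j=1,2}), A_i generated by a_i,
   F_j generated by f_j (indices 1,2 encoded as false,true) *)
Definition B'free (phi : A -> C) (Phi : F -> C) (a : bool -> A) (f : bool -> F) :=
  [/\ free_pair phi a, cyc_antimonotone phi Phi a f & trivially_indep Phi f].

End B.

(* mu is the free convolution mu1 [+] mu2: the distribution of x1 + x2 for
   free x1, x2 (in a ncps (A', psi)) having distributions mu1, mu2. *)
Definition is_free_conv (mu1 mu2 mu : nat -> C) : Prop :=
  exists (A' : algType C) (psi : {scalar A'}) (x : bool -> A'),
    psi 1 = 1 /\ free_pair psi x /\
    (forall n, psi (x false ^+ n) = mu1 n) /\
    (forall n, psi (x true ^+ n) = mu2 n) /\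
    (forall n, psi ((x false + x true) ^+ n) = mu n).

(* Formal series.  A formal Laurent series in z^-1 with finite pole     *)
(* order is represented as (k, s) : int * (nat -> C), meaning           *)
(*     sum_(j >= 0) s j * z^-(k + j).                                   *)
Definition fps := nat -> C.
Definition fps_mul (a b : fps) : fps := fun n => \sum_(i < n.+1) a i * b (n - i)%N.
(* first n+1 coefficients of 1/a (for a 0 != 0) *)
Fixpoint inv_seq (a : fps) (n : nat) : seq C :=
  match n with
  | 0 => [:: (a 0%N)^-1]
  | n'.+1 => let b := inv_seq a n' in
      rcons b (- (a 0%N)^-1 * \sum_(i < n'.+1) a i.+1 * nth 0 b (n' - i)%N)
  end.
Definition fps_inv (a : fps) : fps := fun n => nth 0 (inv_seq a n) n.

Definition lser := (int * fps)%type.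
(* coefficient of z^-m *)
Definition lcoef (s : lser) (m : int) : C :=
  match (m - s.1)%R with Posz j => s.2 j | Negz _ => 0 end.
Definition lone : lser := (0%:Z, fun j => (j == 0%N)%:R).
Definition lmul (s t : lser) : lser := (s.1 + t.1, fps_mul s.2 t.2).
(* 1/s, for s.2 0 != 0 *)
Definition linv (s : lser) : lser := (- s.1, fps_inv s.2).
Definition lpow (s : lser) (n : nat) : lser := iter n (lmul s) lone.
(* d/dz : z^-(k+j) |-> -(k+j) z^-(k+j+1) *)
Definition lderz (s : lser) : lser :=
  (s.1 + 1, fun j => - ((s.1 + j%:Z)%:~R) * s.2 j).
(* the Cauchy transform G_mu(z) = sum_(n >= 0) mu(x^n) z^-(n+1) *)
Definition Gser (mu : nat -> C) : lser := (1%:Z, mu).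
Definition Fser (mu : nat -> C) : lser := linv (Gser mu).
(* G_rho(X(z)) = sum_n rho(x^n) X(z)^-(n+1), given Y = 1/X of order >= 1
   in z^-1 (so that only n <= m contribute to the coefficient of z^-m) *)
Definition Gcomp_inv (rho : nat -> C) (Y : lser) : lser :=
  (0%:Z, fun m => \sum_(n < m.+1) rho n * lcoef (lpow Y n.+1) m%:Z).
Definition Gcomp (rho : nat -> C) (X : lser) : lser := Gcomp_inv rho (linv X).

End NcpsBprime.

From mathcomp Require Import all_boot all_order all_algebra.
From mathcomp Require Import complex reals.
From mathcomp Require Import zify ring.
Set Implicit Arguments. Unset Strict Implicit. Unset Printing Implicit Defensive.
Import GRing.Theory Num.Theory.
Local Open Scope ring_scope.

(* Freeness determines every alternating moment of a_1, a_2 from the individual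
   moments (center one letter at a time and induct on the length), so the moments
   of a_1 + a_2 are those of the free convolution mu.
   The F-component T_n of (a + f)^n, with a = a_1 + a_2 and f = f_1 + f_2, is the sum
   of the words a^(i_0) f a^(i_1) f ... f a^(i_k).  Cyclic-antimonotone independence
   evaluates Phi on such a word as phi(a^(i_0 + i_k)) phi(a^(i_1)) ... Phi(f^k), and
   trivial independence splits Phi(f^k) = nu_1(k) + nu_2(k) =: rho(k).  Summing over
   words, in the variable X = 1/z where G_mu = X M(X), gives
     sum_n Phi(T_n) X^(n+1) = X^2 (M + X M') sum_k rho(k+1) (X M)^k,
   which is G_(nu_1 + nu_2)(F_mu) F_mu' rewritten through F_mu = 1/(X M). *)

Section FreeMoments.
Variable C : fieldType.

Lemma horner_alg_sum (A : algType C) (x : A) (p : {poly C}) :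
  horner_alg x p = \sum_(i < size p) p`_i *: x ^+ i.
Proof.
rewrite -{1}(coefK p) poly_def linear_sum; apply: eq_bigr => i _.
by rewrite linearZ /= rmorphXn /= horner_algX mulr_algl.
Qed.

Lemma in_ualg1_horner_alg (A : algType C) (x : A) (p : {poly C}) :
  in_ualg1 x (horner_alg x p).
Proof. by exists (size p), (fun k => p`_k); rewrite horner_alg_sum. Qed.

Definition pword (A : algType C) (x : bool -> A) (s : seq (bool * {poly C})) : A :=
  \prod_(q <- s) horner_alg (x q.1) q.2.

Definition alternating (s : seq (bool * {poly C})) :=
  sorted (fun u v : bool => u != v) (map fst s).

Lemma pword_cat (A : algType C) (x : bool -> A) s1 s2 :
  pword x (s1 ++ s2) = pword x s1 * pword x s2.
Proof. exact: big_cat. Qed.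

Lemma pword_merge (A : algType C) (x : bool -> A) s1 s2 b p q :
  pword x (s1 ++ (b, p) :: (b, q) :: s2) = pword x (s1 ++ (b, p * q) :: s2).
Proof. by rewrite !pword_cat /pword !big_cons /= rmorphM /= !mulrA. Qed.

Lemma pword_center (A : algType C) (x : bool -> A) s1 s2 b p (c : C) :
  pword x (s1 ++ (b, p) :: s2) =
  pword x (s1 ++ (b, p - c%:P) :: s2) + c *: pword x (s1 ++ s2).
Proof.
rewrite !pword_cat /pword !big_cons /= rmorphB /= horner_algC.
by rewrite mulrBl mulrBr mulr_algl -scalerAr subrK.
Qed.

Lemma nonalternating_split s : ~~ alternating s ->
  exists s1 b p q s2, s = s1 ++ (b, p) :: (b, q) :: s2.
Proof.
elim: s => [|[b p] s IH] //.
case: s IH => [|[b' q] s] IH //.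
rewrite /alternating /= negb_and negbK => /orP [/eqP <-|].
  by exists [::], b, p, q, s.
move/IH => [s1 [b1 [p1 [q1 [s2 ->]]]]].
by exists ((b, p) :: s1), b1, p1, q1, s2.
Qed.

Lemma free_pword_centered (A : algType C) (phi : {scalar A}) (x : bool -> A) s :
  free_pair phi x -> s != [::] -> alternating s ->
  (forall q, q \in s -> phi (horner_alg (x q.1) q.2) = 0) ->
  phi (pword x s) = 0.
Proof.
move=> free_x s_nonempty s_alt s_cen; pose d := (false, 0 : {poly C}).
rewrite /pword (big_nth d) big_mkord.
apply: (free_x (size s) (fun l => (nth d s l).1)
               (fun l => horner_alg (x (nth d s l).1) (nth d s l).2)).
- by rewrite lt0n size_eq0.
- by move=> l ls; split; [apply: in_ualg1_horner_alg | apply: s_cen; rewrite mem_nth].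
- move=> l ls; move/sortedP: s_alt => /(_ false l); rewrite size_map => /(_ ls).
  by rewrite !(nth_map d) // ltnW.
Qed.

Section FreeDetermined.
Variables (A1 A2 : algType C) (phi1 : {scalar A1}) (phi2 : {scalar A2}).
Variables (x1 : bool -> A1) (x2 : bool -> A2).
Hypotheses (phi1_1 : phi1 1 = 1) (phi2_1 : phi2 1 = 1).
Hypotheses (free_x1 : free_pair phi1 x1) (free_x2 : free_pair phi2 x2).
Hypothesis same_moments : forall b n, phi1 (x1 b ^+ n) = phi2 (x2 b ^+ n).

Let same_horner b p : phi1 (horner_alg (x1 b) p) = phi2 (horner_alg (x2 b) p).
Proof.
by rewrite !horner_alg_sum !linear_sum; apply: eq_bigr => i _; rewrite !linearZ /= same_moments.
Qed.

Let noncentered_count s := count (fun q => phi1 (horner_alg (x1 q.1) q.2) != 0) s.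

(* Centering the letters one at a time trades each non-centered letter for a shorter word. *)
Lemma free_alternating_pword s :
  (forall t, size t < size s -> phi1 (pword x1 t) = phi2 (pword x2 t))%N ->
  alternating s -> phi1 (pword x1 s) = phi2 (pword x2 s).
Proof.
move=> IHsize s_alt; move s_count: (noncentered_count s) => k.
elim: k s IHsize s_alt s_count => [|k IHk] s IHsize s_alt s_count.
  have [->|s_nonempty] := eqVneq s [::]; first by rewrite /pword !big_nil phi1_1 phi2_1.
  have s_cen q : q \in s -> phi1 (horner_alg (x1 q.1) q.2) = 0.
    move=> qs; apply/eqP; apply: contraT => q_cen.
    have : has (fun q => phi1 (horner_alg (x1 q.1) q.2) != 0) s by apply/hasP; exists q.
    by rewrite has_count -/(noncentered_count s) s_count.
  by rewrite !free_pword_centered // => q /s_cen; rewrite same_horner.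
have /hasP [[b p] ps /= p_cen] : has (fun q => phi1 (horner_alg (x1 q.1) q.2) != 0) s.
  by rewrite has_count -/(noncentered_count s) s_count.
move: IHsize s_alt s_count; case/splitPr: ps => s1 s2 IHsize s_alt s_count.
set m := phi1 (horner_alg (x1 b) p).
rewrite (pword_center x1 s1 s2 b p m) (pword_center x2 s1 s2 b p m).
rewrite !linearD !linearZ /=.
congr (_ + _ * _); last by apply: IHsize; rewrite !size_cat /= addnS.
apply: IHk.
- by move=> t ts; apply: IHsize; move: ts; rewrite !size_cat.
- by move: s_alt; rewrite /alternating !map_cat.
- move: s_count; rewrite /noncentered_count !count_cat /= rmorphB /= horner_algC.
  by rewrite linearB /= linearZ /= phi1_1 mulr1 subrr eqxx p_cen; lia.
Qed.

Lemma free_pword_moment s : phi1 (pword x1 s) = phi2 (pword x2 s).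
Proof.
have [n] := ubnP (size s); elim: n s => // n IHn s /ltnSE s_n.
have IHsize t : (size t < size s)%N -> phi1 (pword x1 t) = phi2 (pword x2 t).
  by move=> ts; apply: IHn; apply: leq_trans ts s_n.
have [s_alt|/nonalternating_split [s1 [b [p [q [s2 s_def]]]]]] := boolP (alternating s).
  exact: free_alternating_pword.
rewrite s_def !pword_merge; apply: IHsize.
by rewrite s_def !size_cat /= ltn_add2l.
Qed.

Lemma free_sum_moments n :
  phi1 ((x1 false + x1 true) ^+ n) = phi2 ((x2 false + x2 true) ^+ n).
Proof.
suff expand s : phi1 (pword x1 s * (x1 false + x1 true) ^+ n) =
                phi2 (pword x2 s * (x2 false + x2 true) ^+ n).
  by move: (expand [::]); rewrite /pword !big_nil !mul1r.
elim: n s => [|n IH] s; first by rewrite !expr0 !mulr1 free_pword_moment.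
have split_letter (A : algType C) (x : bool -> A) :
  pword x s * (x false + x true) ^+ n.+1 =
  pword x (rcons s (false, 'X)) * (x false + x true) ^+ n +
  pword x (rcons s (true, 'X)) * (x false + x true) ^+ n.
  rewrite -!cats1 !pword_cat /pword !big_seq1 /= !horner_algX.
  by rewrite exprS mulrA mulrDr mulrDl.
by rewrite !split_letter !linearD /= !IH.
Qed.

End FreeDetermined.
End FreeMoments.
Section FAlgebra.
Variables (C : fieldType) (F : lmodType C) (mulF : F -> F -> F).
Hypothesis mulFA : forall f g h, mulF f (mulF g h) = mulF (mulF f g) h.
Hypothesis mulF_linearl : forall (c : C) f g h, mulF (c *: f + g) h = c *: mulF f h + mulF g h.
Hypothesis mulF_linearr : forall (c : C) f g h, mulF f (c *: g + h) = c *: mulF f g + mulF f h.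

Lemma mulFDl f g h : mulF (f + g) h = mulF f h + mulF g h.
Proof. by rewrite -[f in LHS]scale1r mulF_linearl scale1r. Qed.

Lemma mulFDr f g h : mulF f (g + h) = mulF f g + mulF f h.
Proof. by rewrite -[g in LHS]scale1r mulF_linearr scale1r. Qed.

Lemma mul0F f : mulF 0 f = 0.
Proof. by apply: (addrI (mulF 0 f)); rewrite -mulFDl !addr0. Qed.

Lemma mulF0 f : mulF f 0 = 0.
Proof. by apply: (addrI (mulF f 0)); rewrite -mulFDr !addr0. Qed.

Lemma mulF_suml I (r : seq I) (P : pred I) (G : I -> F) h :
  mulF (\sum_(i <- r | P i) G i) h = \sum_(i <- r | P i) mulF (G i) h.
Proof. exact: (big_morph (mulF^~ h) (fun x y => mulFDl x y h) (mul0F h)). Qed.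

Lemma mulF_sumr f I (r : seq I) (P : pred I) (G : I -> F) :
  mulF f (\sum_(i <- r | P i) G i) = \sum_(i <- r | P i) mulF f (G i).
Proof. exact: (big_morph (mulF f) (mulFDr f) (mulF0 f)). Qed.

Lemma mulFZl c f h : mulF (c *: f) h = c *: mulF f h.
Proof. by rewrite -[c *: f]addr0 mulF_linearl mul0F addr0. Qed.

Definition rpowF (g : F) (j : nat) (x : F) : F := iter j (mulF^~ g) x.

Lemma rpowFSr g j x : rpowF g j.+1 x = rpowF g j (mulF x g).
Proof. exact: iterSr. Qed.

Lemma rpowFD g j x y : rpowF g j (x + y) = rpowF g j x + rpowF g j y.
Proof. by elim: j => [|j IH] //=; rewrite IH mulFDl. Qed.

Lemma rpowF_mull g j x y : rpowF g j (mulF x y) = mulF x (rpowF g j y).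
Proof. by elim: j => [|j IH] //=; rewrite IH mulFA. Qed.

Lemma fpowSE g j : fpowS mulF g j = rpowF g j g.
Proof.
elim: j => [|j IH] //.
by rewrite /rpowF iterSr -/(rpowF g j (mulF g g)) rpowF_mull -IH.
Qed.

Lemma in_alg1F_gen g : in_alg1F mulF g g.
Proof. by exists 1%N, (fun _ => 1); rewrite big_ord1 scale1r. Qed.

Lemma in_alg1F_mulr g h : in_alg1F mulF g h -> in_alg1F mulF g (mulF h g).
Proof.
move=> [n [c ->]]; exists n.+1, (fun k => if k is k'.+1 then c k' else 0).
rewrite big_ord_recl scale0r add0r mulF_suml; apply: eq_bigr => i _.
by rewrite mulFZl !fpowSE.
Qed.

Lemma in_alg2F_sum (f : bool -> F) : in_alg2F mulF f (f false + f true).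
Proof.
exists [:: (1, (false, [::])); (1, (true, [::]))].
by rewrite big_cons big_seq1 /= !scale1r.
Qed.

Lemma gprod_const g k m : gprod mulF (fun=> g) k m = fpowS mulF g m.
Proof. by elim: m k => [|m IH] k //=; rewrite IH. Qed.

Fixpoint gprefix (g : nat -> F) (k p : nat) (y : F) : F :=
  if p is p'.+1 then mulF (g k) (gprefix g k.+1 p' y) else y.

Lemma gprodE g k p : gprod mulF g k p = gprefix g k p (g (k + p)%N).
Proof. by elim: p k => [|p IH] k /=; rewrite ?addn0 // IH addSnnS. Qed.

Lemma gprefix_eta g k p i z y :
  (k + p <= i)%N -> gprefix [eta g with i |-> z] k p y = gprefix g k p y.
Proof.
elim: p k => [|p IH] k //= kp_i.
by rewrite IH ?addSnnS // ifN_eq //; apply/eqP; lia.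
Qed.

Lemma gprefix_mulF g k p y : gprefix g k p (mulF (g (k + p)%N) y) = gprefix g k p.+1 y.
Proof. by elim: p k => [|p IH] k /=; rewrite ?addn0 // -addSnnS IH. Qed.

Lemma gprefixD g k p x y : gprefix g k p (x + y) = gprefix g k p x + gprefix g k p y.
Proof. by elim: p k => [|p IH] k //=; rewrite IH mulFDr. Qed.

Section TrivialIndependence.
Variables (Phi : {scalar F}) (f : bool -> F).
Hypothesis triv : trivially_indep mulF Phi f.
Let ff := f false + f true.

Definition alt_letters (idx : nat -> bool) (g : nat -> F) (p : nat) :=
  (forall l, l <= p -> in_alg1F mulF (f (idx l)) (g l))%N /\
  (forall l, l < p -> idx l != idx l.+1)%N.

Lemma alt_letters_mulr idx g p :
  alt_letters idx g p -> alt_letters idx [eta g with p |-> mulF (g p) (f (idx p))] p.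
Proof.
move=> [g_in idx_alt]; split=> // l lp /=.
by case: eqP => [->|_]; [apply/in_alg1F_mulr/g_in | apply: g_in].
Qed.

Lemma alt_letters_rcons idx g p :
  alt_letters idx g p ->
  alt_letters [eta idx with p.+1 |-> ~~ idx p] [eta g with p.+1 |-> f (~~ idx p)] p.+1.
Proof.
move=> [g_in idx_alt]; split=> l lp /=.
  by case: eqP => [_|l_p]; [apply: in_alg1F_gen | apply: g_in; lia].
rewrite ifN_eq; last by rewrite neq_ltn lp.
have [->|l_p] := eqVneq l p; first by rewrite eqxx; case: (idx p).
by rewrite ifN_eq ?eqSS // idx_alt //; lia.
Qed.

(* Each factor [ff = f b + f (~~ b)] of the tail either merges into the last letter or
   lengthens the alternating word, which [triv] annihilates. *)
Lemma trivially_indep_tail j idx g p : alt_letters idx g p ->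
  Phi (gprefix g 0 p (rpowF ff j (g p))) =
  if p == 0%N then Phi (rpowF (f (idx 0%N)) j (g 0%N)) else 0.
Proof.
elim: j idx g p => [|j IHj] idx g p letters.
  case: p letters => [|p] [g_in idx_alt] //=.
  by rewrite -gprodE; apply: (triv (idx := idx)).
have ff_split : ff = f (idx p) + f (~~ idx p) by rewrite /ff; case: (idx p); rewrite // addrC.
rewrite rpowFSr {2}ff_split mulFDr rpowFD gprefixD linearD.
have -> : gprefix g 0 p (rpowF ff j (mulF (g p) (f (~~ idx p)))) =
    gprefix [eta g with p.+1 |-> f (~~ idx p)] 0 p.+1
      (rpowF ff j ([eta g with p.+1 |-> f (~~ idx p)] p.+1)).
  rewrite -gprefix_mulF (@gprefix_eta _ 0 p p.+1) // /= eqxx ifN_eq ?rpowF_mull //.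
  by rewrite neq_ltn ltnSn.
rewrite (IHj _ _ _ (alt_letters_rcons letters)) addr0.
have -> : gprefix g 0 p (rpowF ff j (mulF (g p) (f (idx p)))) =
    gprefix [eta g with p |-> mulF (g p) (f (idx p))] 0 p
      (rpowF ff j ([eta g with p |-> mulF (g p) (f (idx p))] p)).
  by rewrite /= eqxx gprefix_eta.
rewrite (IHj _ _ _ (alt_letters_mulr letters)).
by case: eqP => // ->; rewrite rpowFSr.
Qed.

Lemma trivially_indep_fpowS j :
  Phi (fpowS mulF ff j) = Phi (fpowS mulF (f false) j) + Phi (fpowS mulF (f true) j).
Proof.
have letter b : alt_letters (fun=> b) (fun=> f b) 0.
  by split=> // l _; apply: in_alg1F_gen.
rewrite !fpowSE {2}/ff rpowFD linearD.
by rewrite (trivially_indep_tail _ (letter false)) (trivially_indep_tail _ (letter true)).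
Qed.

End TrivialIndependence.
End FAlgebra.
Section UnitalSubalgebra.
Variables (C : fieldType) (A : algType C) (a : bool -> A).

Lemma in_ualg2_1 : in_ualg2 a 1.
Proof. by exists [:: (1, [::])]; rewrite big_seq1 /= big_nil scale1r. Qed.

Lemma in_ualg2D x y : in_ualg2 a x -> in_ualg2 a y -> in_ualg2 a (x + y).
Proof. by move=> [s1 ->] [s2 ->]; exists (s1 ++ s2); rewrite big_cat. Qed.

Lemma in_ualg2_mull b x : in_ualg2 a x -> in_ualg2 a (a b * x).
Proof.
move=> [s ->]; exists [seq (p.1, b :: p.2) | p <- s].
rewrite big_map mulr_sumr; apply: eq_bigr => p _ /=.
by rewrite big_cons scalerAr.
Qed.

Lemma in_ualg2_exp_sum n : in_ualg2 a ((a false + a true) ^+ n).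
Proof.
elim: n => [|n IH]; first exact: in_ualg2_1.
by rewrite exprS mulrDl; apply: in_ualg2D; apply: in_ualg2_mull.
Qed.

End UnitalSubalgebra.

Section Bimodule.
Variables (C : fieldType) (A : algType C) (F : lmodType C) (phi : {scalar A}).
Variables (mulF : F -> F -> F) (lact : A -> F -> F) (ract : F -> A -> F).
Hypothesis ax : ncpsB'_axioms phi mulF lact ract.

Lemma ncps_phi1 : phi 1 = 1.
Proof. by case: ax. Qed.

Lemma ncps_mulFA f g h : mulF f (mulF g h) = mulF (mulF f g) h.
Proof. by have [_ [-> _]] := ax. Qed.

Lemma ncps_mulF_linearl c f g h : mulF (c *: f + g) h = c *: mulF f h + mulF g h.
Proof. by have [_ [_ [-> _]]] := ax. Qed.

Lemma ncps_mulF_linearr c f g h : mulF f (c *: g + h) = c *: mulF f g + mulF f h.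
Proof. by have [_ [_ [_ [-> _]]]] := ax. Qed.

Lemma lact1 f : lact 1 f = f.
Proof. by have [_ [_ [_ [_ [-> _]]]]] := ax. Qed.

Lemma lactM x y f : lact (x * y) f = lact x (lact y f).
Proof. by have [_ [_ [_ [_ [_ [-> _]]]]]] := ax. Qed.

Lemma ract1 f : ract f 1 = f.
Proof. by have [_ [_ [_ [_ [_ [_ [-> _]]]]]]] := ax. Qed.

Lemma lact0l f : lact 0 f = 0.
Proof.
have [_ [_ [_ [_ [_ [_ [_ [_ [_ [lact_linear _]]]]]]]]]] := ax.
by apply: (addrI (lact 0 f)); rewrite -[X in X + _]scale1r -lact_linear !addr0 scale1r.
Qed.

Lemma lactD x f g : lact x (f + g) = lact x f + lact x g.
Proof.
have [_ [_ [_ [_ [_ [_ [_ [_ [_ [_ [lact_linear _]]]]]]]]]]] := ax.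
by rewrite -[f in LHS]scale1r lact_linear scale1r.
Qed.

Lemma lact0r x : lact x 0 = 0.
Proof. by apply: (addrI (lact x 0)); rewrite -lactD !addr0. Qed.

Lemma ract0r f : ract f 0 = 0.
Proof.
have [_ [_ [_ [_ [_ [_ [_ [_ [_ [_ [_ [ract_linear _]]]]]]]]]]]] := ax.
by apply: (addrI (ract f 0)); rewrite -[X in X + _]scale1r -ract_linear !addr0 scale1r.
Qed.

Lemma mulF_ract x f g : mulF (ract f x) g = mulF f (lact x g).
Proof. by have [_ [_ [_ [_ [_ [_ [_ [_ [_ [_ [_ [_ [_ [_ [_ ->]]]]]]]]]]]]]]] := ax. Qed.

Lemma lact_sum x I (r : seq I) (P : pred I) (G : I -> F) :
  lact x (\sum_(i <- r | P i) G i) = \sum_(i <- r | P i) lact x (G i).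
Proof. exact: (big_morph (lact x) (lactD x) (lact0r x)). Qed.

Lemma powB_fst (b : A * F) n : (powB mulF lact ract b n).1 = b.1 ^+ n.
Proof. by elim: n => [|n IH] //; rewrite exprS -IH. Qed.

Lemma powB_sndS (b : A * F) n :
  (powB mulF lact ract b n.+1).2 = lact b.1 (powB mulF lact ract b n).2 +
    ract b.2 (powB mulF lact ract b n).1 + mulF b.2 (powB mulF lact ract b n).2.
Proof. by []. Qed.

Lemma powB_snd_free (g : F) n : (powB mulF lact ract (0, g) n.+1).2 = fpowS mulF g n.
Proof.
elim: n => [|n IH].
  by rewrite powB_sndS /= lact0l ract1 (mulF0 ncps_mulF_linearr) add0r addr0.
by rewrite powB_sndS IH powB_fst /= lact0l expr0n /= ract0r !add0r.
Qed.

Section FirstLetter.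
Variables (x : A) (g : F).

Definition Tpow n := (powB mulF lact ract (x, g) n).2.

(* The F-component of g (x + g)^m. *)
Definition Vpow m := ract g (x ^+ m) + mulF g (Tpow m).

Lemma Tpow_first_letter m : Tpow m = \sum_(i < m) lact (x ^+ i) (Vpow (m.-1 - i)).
Proof.
elim: m => [|m IH]; first by rewrite big_ord0.
rewrite [LHS]/Tpow powB_sndS powB_fst -/(Tpow m) -addrA -/(Vpow m).
rewrite big_ord_recl expr0 lact1 subn0 addrC.
congr (_ + _); rewrite IH lact_sum; apply: eq_bigr => i _.
by rewrite exprS lactM; congr (lact _ (lact _ (Vpow _))); rewrite /= /bump; lia.
Qed.

Lemma Vpow_second_letter m :
  Vpow m = ract g (x ^+ m) + \sum_(i < m) mulF (ract g (x ^+ i)) (Vpow (m.-1 - i)).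
Proof.
rewrite {1}/Vpow Tpow_first_letter (mulF_sumr ncps_mulF_linearr).
by congr (_ + _); apply: eq_bigr => i _; rewrite mulF_ract.
Qed.

End FirstLetter.
End Bimodule.
Section CyclicAntimonotone.
Variables (C : fieldType) (A : algType C) (F : lmodType C) (phi : {scalar A}).
Variables (mulF : F -> F -> F) (lact : A -> F -> F) (ract : F -> A -> F).
Variable Phi : {scalar F}.
Hypothesis ax : ncpsB'_axioms phi mulF lact ract.
Variables (a : bool -> A) (f : bool -> F).
Hypothesis cyc : cyc_antimonotone mulF lact ract phi Phi a f.

Let aa := a false + a true.
Let ff := f false + f true.
Let mulF_linearr := ncps_mulF_linearr ax.

Definition chain (ctx : seq A) (y : F) : F := foldr (fun c z => mulF (ract ff c) z) y ctx.

Lemma chain_rcons ctx c y : chain (rcons ctx c) y = chain ctx (mulF (ract ff c) y).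
Proof. exact: foldr_rcons. Qed.

Lemma chainD ctx x y : chain ctx (x + y) = chain ctx x + chain ctx y.
Proof. by elim: ctx => [|c ctx IH] //=; rewrite IH (mulFDr mulF_linearr). Qed.

Lemma chain_sum ctx I (r : seq I) (P : pred I) (G : I -> F) :
  chain ctx (\sum_(i <- r | P i) G i) = \sum_(i <- r | P i) chain ctx (G i).
Proof.
apply: (big_morph (chain ctx) (chainD ctx)).
by elim: ctx => [|c ctx IH] //=; rewrite IH (mulF0 mulF_linearr).
Qed.

Definition rho (j : nat) : C := Phi (fpowS mulF ff j).

Lemma altF_chain ctx d (c : nat -> A) k :
  (forall l, k <= l -> c l = nth d ctx (l - k))%N ->
  altF mulF ract c (fun=> ff) k (size ctx) = chain ctx (ract ff d).
Proof.
elim: ctx k => [|y ctx IH] k c_def /=; first by rewrite c_def // subnn.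
rewrite c_def // subnn (IH k.+1) // => l kl.
by rewrite c_def ?(ltnW kl) // -[(l - k)%N]prednK ?subn_gt0 // -subnS.
Qed.

Lemma Phi_chain ctx c0 d :
  in_ualg2 a c0 -> in_ualg2 a d -> {in ctx, forall c, in_ualg2 a c} ->
  Phi (lact c0 (chain ctx (ract ff d))) =
  phi (c0 * d) * (\prod_(c <- ctx) phi c) * rho (size ctx).
Proof.
move=> c0_in d_in ctx_in.
pose c l := if l is l'.+1 then nth d ctx l' else c0.
have c_in l : (l <= (size ctx).+1)%N -> in_ualg2 a (c l).
  case: l => [|l] //= _; have [l_ctx|l_ctx] := ltnP l (size ctx).
    by apply: ctx_in; rewrite mem_nth.
  by rewrite nth_default.
have := cyc c_in (fun l _ => in_alg2F_sum mulF f).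
rewrite (@altF_chain _ d) => [->|[|l] //= _]; last by rewrite subn1.
by rewrite gprod_const /= nth_default // big_add1 /= (big_nth d).
Qed.

Variable N : nat.

Definition momentp : {poly C} := \poly_(i < N.+1) phi (aa ^+ i).
Definition cmomentp (c0 : A) : {poly C} := \poly_(i < N.+1) phi (c0 * aa ^+ i).
Definition chainp (j : nat) : {poly C} :=
  \sum_(k < N.+1) rho (j + k) *: ('X * momentp) ^+ k.

Lemma chainp_rec j : chainp j =
  (rho j)%:P + 'X * momentp * chainp j.+1 - rho (j + N.+1) *: ('X * momentp) ^+ N.+1.
Proof.
rewrite /chainp big_ord_recl addn0 expr0 -alg_polyC -addrA; congr (_ + _).
rewrite mulr_sumr big_ord_recr /= -scalerAr -exprS addSn -addnS addrK.
by apply: eq_bigr => i _; rewrite /bump /= add1n addnS addSn -scalerAr -exprS.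
Qed.

Lemma coef_cmomentp_chainp c0 j m : (m <= N)%N ->
  (cmomentp c0 * chainp j)`_m = phi (c0 * aa ^+ m) * rho j +
    \sum_(i < m) phi (aa ^+ i) * (cmomentp c0 * chainp j.+1)`_(m.-1 - i).
Proof.
move=> mN; rewrite {1}chainp_rec mulrBr coefB !mulrDr coefD.
have -> : (cmomentp c0 * (rho (j + N.+1) *: ('X * momentp) ^+ N.+1))`_m = 0.
  by rewrite exprMn -scalerAr coefZ mulrCA coefXnM ltnS mN mulr0.
rewrite subr0 coefMC coef_poly ltnS mN; congr (_ + _).
rewrite mulrCA -mulrA coefXM; case: m mN => [|m] mN; first by rewrite big_ord0.
rewrite coefM; apply: eq_bigr => i _; rewrite coef_poly ifT //.
by have := ltn_ord i; lia.
Qed.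

Lemma Phi_chain_Vpow m ctx c0 : (m <= N)%N ->
  in_ualg2 a c0 -> {in ctx, forall c, in_ualg2 a c} ->
  Phi (lact c0 (chain ctx (Vpow mulF lact ract aa ff m))) =
  (\prod_(c <- ctx) phi c) * (cmomentp c0 * chainp (size ctx))`_m.
Proof.
elim/ltn_ind: m ctx => m IH ctx mN c0_in ctx_in.
rewrite (Vpow_second_letter ax) chainD (lactD ax) linearD chain_sum (lact_sum ax) linear_sum.
rewrite Phi_chain ?(coef_cmomentp_chainp _ _ mN) //; last exact: in_ualg2_exp_sum.
rewrite mulrDr mulr_sumr; congr (_ + _); first by rewrite mulrAC mulrC.
apply: eq_bigr => i _; have i_m := ltn_ord i.
have ctx_i_in : {in rcons ctx (aa ^+ i), forall c, in_ualg2 a c}.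
  by move=> c; rewrite mem_rcons inE => /orP [/eqP ->|/ctx_in //]; apply: in_ualg2_exp_sum.
by rewrite -chain_rcons IH // ?big_rcons ?size_rcons ?mulrA //; lia.
Qed.

Lemma coef_sum_cmomentp n j : (j < n <= N.+1)%N ->
  (\sum_(i < n) 'X^i * cmomentp (aa ^+ i))`_j = (momentp + 'X * momentp^`())`_j.
Proof.
case/andP=> jn nN; have jN : (j < N.+1)%N by apply: leq_trans nN.
rewrite coef_sum coefD coefXM coef_deriv coef_poly jN.
have -> : \sum_(i < n) ('X^i * cmomentp (aa ^+ i))`_j = \sum_(i < n | (i < j.+1)%N) phi (aa ^+ j).
  rewrite [RHS]big_mkcond; apply: eq_bigr => i _; rewrite coefXnM coef_poly !ltnS ltnNge.
  have [ij|//] := leqP i j; rewrite /= ifT; first by rewrite -exprD subnKC.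
  by rewrite (leq_trans (leq_subr _ _)) // -ltnS.
rewrite -(big_ord_widen _ (fun=> _) jn) sumr_const card_ord mulrS; congr (_ + _).
by case: j jn jN => //= j _ jN; rewrite coef_poly jN.
Qed.

Lemma Phi_Tpow n : (n <= N)%N ->
  Phi (Tpow mulF lact ract aa ff n) = ('X * ((momentp + 'X * momentp^`()) * chainp 0))`_n.
Proof.
move=> nN; rewrite (Tpow_first_letter ax) linear_sum coefXM.
case: n nN => [|n] nN; first by rewrite big_ord0.
have Phi_term (i : 'I_n.+1) : Phi (lact (aa ^+ i) (Vpow mulF lact ract aa ff (n - i))) =
    ('X^i * cmomentp (aa ^+ i) * chainp 0)`_n.
  rewrite -[Vpow _ _ _ _ _ _]/(chain [::] _) Phi_chain_Vpow ?big_nil ?mul1r //.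
  - by rewrite -mulrA coefXnM ltnNge -ltnS ltn_ord.
  - by apply: leq_trans (leq_subr _ _) _; apply: ltnW.
  - exact: in_ualg2_exp_sum.
rewrite /= (eq_bigr _ (fun i _ => Phi_term i)) -coef_sum -mulr_suml !coefM.
by apply: eq_bigr => j _; rewrite coef_sum_cmomentp // ltn_ord ltnS ltnW.
Qed.
End CyclicAntimonotone.
Section ModXn.
Variables (C : fieldType) (B : nat).

Definition eqmodX (p q : {poly C}) := exists h, p = q + 'X^B * h.

Lemma eqmodX_refl p : eqmodX p p.
Proof. by exists 0; rewrite mulr0 addr0. Qed.

Lemma eqmodX_sym p q : eqmodX p q -> eqmodX q p.
Proof. by move=> [h ->]; exists (- h); rewrite mulrN addrK. Qed.

Lemma eqmodX_trans p q r : eqmodX p q -> eqmodX q r -> eqmodX p r.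
Proof. by move=> [h1 ->] [h2 ->]; exists (h2 + h1); rewrite mulrDr addrA. Qed.

Lemma eqmodXD p1 q1 p2 q2 : eqmodX p1 q1 -> eqmodX p2 q2 -> eqmodX (p1 + p2) (q1 + q2).
Proof. by move=> [h1 ->] [h2 ->]; exists (h1 + h2); ring. Qed.

Lemma eqmodXM p1 q1 p2 q2 : eqmodX p1 q1 -> eqmodX p2 q2 -> eqmodX (p1 * p2) (q1 * q2).
Proof. by move=> [h1 ->] [h2 ->]; exists (h1 * q2 + q1 * h2 + 'X^B * h1 * h2); ring. Qed.

Lemma eqmodXZ c p q : eqmodX p q -> eqmodX (c *: p) (c *: q).
Proof. by move=> [h ->]; exists (c *: h); rewrite scalerDr scalerAr. Qed.

Lemma eqmodXX p q k : eqmodX p q -> eqmodX (p ^+ k) (q ^+ k).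
Proof.
move=> pq; elim: k => [|k IH]; first exact: eqmodX_refl.
by rewrite !exprS; apply: eqmodXM.
Qed.

Lemma eqmodX_sum (I : Type) (r : seq I) (P : pred I) (G H : I -> {poly C}) :
  (forall i, P i -> eqmodX (G i) (H i)) ->
  eqmodX (\sum_(i <- r | P i) G i) (\sum_(i <- r | P i) H i).
Proof.
move=> GH; elim/big_rec2: _ => [|i p q Pi pq]; first exact: eqmodX_refl.
exact: eqmodXD (GH i Pi) pq.
Qed.

Lemma eqmodX_coef (p q : {poly C}) i : eqmodX p q -> (i < B)%N -> p`_i = q`_i.
Proof. by move=> [h ->] iB; rewrite coefD coefXnM iB addr0. Qed.

Lemma coef_eqmodX (p q : {poly C}) : (forall i, (i < B)%N -> p`_i = q`_i) -> eqmodX p q.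
Proof.
move=> pq; exists (drop_poly B (p - q)); rewrite mulrC.
have -> : drop_poly B (p - q) * 'X^B = p - q.
  rewrite -[RHS](poly_take_drop B) [take_poly _ _](_ : _ = 0) ?add0r //.
  by apply/polyP => i; rewrite coef_take_poly coef0 coefB; case: ifP => // /pq ->; rewrite subrr.
by rewrite addrC subrK.
Qed.

(* X d/dX preserves the ideal (X^B): X (X^B h)' = X^B (B h + X h'). *)
Lemma eqmodX_Xderiv p q : eqmodX p q -> eqmodX ('X * p^`()) ('X * q^`()).
Proof.
have X_derivXn n : 'X * ('X^(n.-1) *+ n) = ('X^n *+ n : {poly C}).
  by case: n => [|n]; rewrite ?mulr0n ?mulr0 // mulrnAr -exprS.
move=> [h ->]; exists (h *+ B + 'X * h^`()).
rewrite derivD derivM derivXn !mulrDr mulrA X_derivXn; congr (_ + _).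
by rewrite mulrnAl -mulrnAr; ring.
Qed.

End ModXn.
Section FormalSeries.
Variable C : fieldType.
Implicit Types (a : fps C) (s : lser C).

Lemma size_inv_seq a n : size (inv_seq a n) = n.+1.
Proof. by elim: n => [|n IH] //=; rewrite size_rcons IH. Qed.

Lemma nth_inv_seq a n i : (i <= n)%N -> nth 0 (inv_seq a n) i = fps_inv a i.
Proof.
elim: n => [|n IH] i_n; first by move: i_n; rewrite leqn0 => /eqP ->.
rewrite /= nth_rcons size_inv_seq; case: ltngtP i_n => [i_lt _|//|->] ; first exact: IH.
by rewrite /fps_inv /= nth_rcons size_inv_seq ltnn eqxx.
Qed.

Lemma fps_invS a n :
  fps_inv a n.+1 = - (a 0%N)^-1 * \sum_(i < n.+1) a i.+1 * fps_inv a (n - i)%N.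
Proof.
rewrite {1}/fps_inv /= nth_rcons size_inv_seq ltnn eqxx; congr (_ * _).
by apply: eq_bigr => i _; rewrite nth_inv_seq ?leq_subr.
Qed.

Lemma fps_mul_inv a n : a 0%N != 0 -> fps_mul a (fps_inv a) n = (n == 0%N)%:R.
Proof.
move=> a0; rewrite /fps_mul; case: n => [|n]; first by rewrite big_ord1 /fps_inv /= mulfV.
rewrite big_ord_recl fps_invS mulrA mulrN mulfV // mulN1r addrC; apply/eqP.
by rewrite subr_eq0; apply/eqP/eq_bigr => i _; rewrite /= /bump add1n subSS.
Qed.

Definition trunc_fps (B : nat) a : {poly C} := \poly_(i < B) a i.

Lemma coef_trunc_fpsM B a b i : (i < B)%N ->
  (trunc_fps B a * trunc_fps B b)`_i = fps_mul a b i.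
Proof.
move=> iB; rewrite coefM; apply: eq_bigr => j _.
by rewrite !coef_poly !ifT //; have := ltn_ord j; lia.
Qed.

Lemma eqmodX_trunc_fps_inv B a :
  a 0%N != 0 -> eqmodX B (trunc_fps B a * trunc_fps B (fps_inv a)) 1.
Proof.
by move=> a0; apply: coef_eqmodX => i iB; rewrite coef_trunc_fpsM // fps_mul_inv // coef1.
Qed.

Lemma lpow_fst s k : s.1 = 1 -> (lpow s k).1 = k%:Z.
Proof.
move=> s1; elim: k => [|k IH] //.
by rewrite /lpow iterS -/(lpow s k) /= IH s1 -addn1 PoszD addrC.
Qed.

Lemma coef_lpow_snd B s k i : (i < B)%N -> (lpow s k).2 i = (trunc_fps B s.2 ^+ k)`_i.
Proof.
elim: k i => [|k IH] i iB; first by rewrite expr0 coef1.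
rewrite exprS coefM; apply: eq_bigr => j _.
rewrite IH; last by have := ltn_ord j; lia.
by rewrite coef_poly ifT //; have := ltn_ord j; lia.
Qed.

Lemma lcoef_nat s (k i : nat) : s.1 = k%:Z ->
  lcoef s i%:Z = if (k <= i)%N then s.2 (i - k)%N else 0.
Proof.
move=> s1; rewrite /lcoef s1; case: leqP => ki; first by rewrite subzn.
by case E: (i%:Z - k%:Z) => // [j]; lia.
Qed.

(* In z = 1/X, with G = X M and F = N / X = 1/G, this reads -G^k G' = G^(k+2) F'. *)
Lemma eqmodX_inverse_deriv B k (M N : {poly C}) : eqmodX B (M * N) 1 ->
  eqmodX B ('X^2 * (M + 'X * M^`()) * ('X * M) ^+ k) (('X * M) ^+ k.+2 * (N - 'X * N^`())).
Proof.
move=> MN; set DM := 'X * M^`(); set DN := 'X * N^`().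
have D0 : eqmodX B (DM * N + M * DN) 0.
  have := eqmodX_Xderiv MN; rewrite derivM -polyC1 derivC mulr0.
  by rewrite (_ : 'X * _ = DM * N + M * DN) // /DM /DN; ring.
have -> : ('X * M) ^+ k.+2 * (N - DN) =
    'X^2 * ('X * M) ^+ k * ((M + DM) * (M * N) + (- M) * (DM * N + M * DN)).
  by rewrite !exprS; ring.
have -> : 'X^2 * (M + DM) * ('X * M) ^+ k =
    'X^2 * ('X * M) ^+ k * ((M + DM) * 1 + (- M) * 0) by ring.
apply/eqmodXM/eqmodXD; first exact: eqmodX_refl.
  by apply/eqmodXM/eqmodX_sym/MN/eqmodX_refl.
by apply/eqmodXM/eqmodX_sym/D0/eqmodX_refl.
Qed.
End FormalSeries.
Section ChainRule.
Variable C : fieldType.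
Implicit Types (mu nu rho : fps C).

Lemma coef_Gcomp_Fser mu rho B K i : (i < B)%N -> (i < K)%N ->
  (Gcomp rho (Fser mu)).2 i =
  (\sum_(k < K) rho k *: ('X * trunc_fps B (fps_inv (fps_inv mu))) ^+ k.+1)`_i.
Proof.
move=> iB iK; rewrite /Gcomp /Gcomp_inv /=.
set Y := linv (Fser mu); set G := fun n : nat => rho n * lcoef (lpow Y n.+1) i%:Z.
rewrite (big_ord_widen _ G iK) big_mkcond coef_sum.
apply: eq_bigr => k _; rewrite /G coefZ exprMn coefXnM (lcoef_nat _ (lpow_fst _ _)) //.
have [ki|ik] := ltnP k i; last by rewrite !ltnS ik !mulr0; case: ifP.
rewrite !ltnS (ltnW ki) leqNgt ki (coef_lpow_snd (B := B)) //.
by apply: leq_ltn_trans (leq_subr _ _) iB.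
Qed.

Lemma coef_lderz_Fser mu B i : (i < B)%N ->
  (lderz (Fser mu)).2 i =
  (trunc_fps B (fps_inv mu) - 'X * (trunc_fps B (fps_inv mu))^`())`_i.
Proof.
move=> iB; rewrite coefB coefXM coef_deriv !coef_poly iB /=.
case: i iB => [|i] iB /=; first by rewrite addr0 subr0 mulrN1z opprK mul1r.
rewrite iB (_ : (- 1 + i.+1%:Z)%R = i%:Z); last by rewrite -addn1 PoszD addrC addrK.
by rewrite -mulr_natl -[i%:~R]/(i%:R) mulrS; ring.
Qed.

Lemma lcoef_Gser_nat nu (n : nat) :
  lcoef (Gser nu) n = if n is n'.+1 then nu n' else 0.
Proof. by rewrite (lcoef_nat _ (erefl (Gser nu).1)); case: n => //= n; rewrite subn1. Qed.

Lemma lcoef_Gcomp_lderz mu rho (n : nat) :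
  let N := trunc_fps n.+1 (fps_inv mu) in
  lcoef (lmul (Gcomp rho (Fser mu)) (lderz (Fser mu))) n =
  ((\sum_(k < n.+2) rho k *: ('X * trunc_fps n.+1 (fps_inv (fps_inv mu))) ^+ k.+1) *
   (N - 'X * N^`()))`_n.
Proof.
move=> N; rewrite (@lcoef_nat _ _ 0) // subn0 -[(lmul _ _).2 n]/(fps_mul _ _ n).
rewrite -(coef_trunc_fpsM (B := n.+1)) //.
apply: eqmodX_coef (ltnSn n); apply: eqmodXM; apply: coef_eqmodX => i iB.
  by rewrite coef_poly iB (coef_Gcomp_Fser _ _ iB (leqW iB)).
by rewrite coef_poly iB (coef_lderz_Fser _ iB).
Qed.

Theorem Gser_chain_rule mu nu rho : mu 0%N = 1 -> rho 0%N = 0 ->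
  (forall N n, (n <= N)%N -> nu n =
     ('X * ((trunc_fps N.+1 mu + 'X * (trunc_fps N.+1 mu)^`()) *
            \sum_(k < N.+1) rho k.+1 *: ('X * trunc_fps N.+1 mu) ^+ k))`_n) ->
  forall m : int,
  lcoef (Gser nu) m = lcoef (lmul (Gcomp rho (Fser mu)) (lderz (Fser mu))) m.
Proof.
move=> mu0 rho0 nu_def [n|//].
have -> : lcoef (Gser nu) n = ('X^2 * ((trunc_fps n.+1 mu + 'X * (trunc_fps n.+1 mu)^`()) *
            \sum_(k < n.+1) rho k.+1 *: ('X * trunc_fps n.+1 mu) ^+ k))`_n.
  rewrite lcoef_Gser_nat exprS -mulrA coefXM.
  by case: n => //= n; rewrite (nu_def n.+1).
rewrite lcoef_Gcomp_lderz; apply: eqmodX_coef (ltnSn n).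
set B := n.+1; set M := trunc_fps B mu; set N := trunc_fps B (fps_inv mu).
set Q := trunc_fps B (fps_inv (fps_inv mu)).
have MN : eqmodX B (M * N) 1 by apply: eqmodX_trunc_fps_inv; rewrite mu0 oner_neq0.
have QM : eqmodX B Q M.
  have NQ : eqmodX B (N * Q) 1.
    by apply: eqmodX_trunc_fps_inv; rewrite /fps_inv /= mu0 invr1 oner_neq0.
  rewrite -[Q]mul1r -[M]mulr1; apply: eqmodX_trans (eqmodXM (eqmodX_sym MN) (eqmodX_refl _ _)) _.
  by rewrite -mulrA; apply: eqmodXM (eqmodX_refl _ _) NQ.
rewrite [\sum_(k < B.+1) _]big_ord_recl rho0 scale0r add0r !mulr_sumr mulr_suml.
apply: eqmodX_sum => k _; rewrite -!scalerAr -scalerAl mulrA; apply: eqmodXZ.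
apply: eqmodX_trans (eqmodX_inverse_deriv k MN) _; apply: eqmodXM (eqmodX_refl _ _).
by apply: eqmodXX; apply: eqmodXM (eqmodX_refl _ _) (eqmodX_sym QM).
Qed.
End ChainRule.
Theorem corollary3p4 (R : realType) (A : algType R[i]) (F : lmodType R[i])
  (phi : {scalar A}) (mulF : F -> F -> F) (lact : A -> F -> F)
  (ract : F -> A -> F) (Phi : {scalar F})
  (a : bool -> A) (f : bool -> F) (mu1 mu2 nu1 nu2 : nat -> R[i]) :
  ncpsB'_axioms phi mulF lact ract ->
  B'free mulF lact ract phi Phi a f ->
  (forall n, phi (a false ^+ n) = mu1 n) ->
  (forall n, phi (a true ^+ n) = mu2 n) ->
  (forall n, varphi'B Phi (powB mulF lact ract (0, f false) n) = nu1 n) ->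
  (forall n, varphi'B Phi (powB mulF lact ract (0, f true) n) = nu2 n) ->
  forall mu : nat -> R[i], is_free_conv mu1 mu2 mu ->
  let b1 := (a false, f false) in
  let b2 := (a true, f true) in
  let b := addB b1 b2 in
  let nu := fun n => varphi'B Phi (powB mulF lact ract b n) in
  (forall n, varphiB phi (powB mulF lact ract b n) = mu n) /\
  (forall m : int,
     lcoef (Gser nu) m =
     lcoef (lmul (Gcomp (fun n => nu1 n + nu2 n) (Fser mu)) (lderz (Fser mu))) m).
Proof.
move=> ax [free_a cyc triv] mom_a1 mom_a2 mom_f1 mom_f2 mu.
move=> [A' [psi [x [psi_1 [free_x [mom_x1 [mom_x2 mom_x]]]]]]] b1 b2 b nu.
have mom_b n : varphiB phi (powB mulF lact ract b n) = mu n.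
  rewrite /varphiB powB_fst -mom_x.
  apply: free_sum_moments => //; first exact: ncps_phi1 ax.
  by case=> m; rewrite ?mom_a1 ?mom_a2 ?mom_x1 ?mom_x2.
have mom_f k : Phi (fpowS mulF (f false + f true) k) = nu1 k.+1 + nu2 k.+1.
  rewrite (trivially_indep_fpowS (ncps_mulFA ax) (ncps_mulF_linearl ax)
                                 (ncps_mulF_linearr ax) triv).
  by rewrite -mom_f1 -mom_f2 /varphi'B !(powB_snd_free ax).
split=> //; apply: Gser_chain_rule.
- by rewrite -(mom_b 0%N) /varphiB /= (ncps_phi1 ax).
- by rewrite -mom_f1 -mom_f2 /varphi'B /= linear0 addr0.
move=> N n nN; rewrite /nu /varphi'B (Phi_Tpow ax cyc nN) /chainp.
have -> : momentp phi a N = trunc_fps N.+1 mu.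
  by apply/polyP => i; rewrite !coef_poly -mom_b /varphiB powB_fst.
by under eq_bigr => k _ do rewrite add0n /rho mom_f.
Qed.
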